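(* Let $n\ge4$ be even, $p\ge n+1$ an integer, $c_1$ a positive integer, $a_k=pc_k$, $c_{k+1}=p^2c_k$, and let $T$, $I^{(k)}_i$ and $\lambda_j$ be as in the context. Then for every $k\ge0$: (1) $\lambda_1(I^{(k)}_3)=\lambda_1(I^{(k)}_5)=\cdots=\lambda_1(I^{(k)}_{n-1})$; (2) $\lambda_1(I^{(k)}_2)=\lambda_1(I^{(k)}_4)=\cdots=\lambda_1(I^{(k)}_{n-2})$; (3) for every odd $m$ with $3\le m\le n-1$: $\lambda_m(I^{(k)}_t)$ takes the same value for all odd $t\in\{3,\dots,n-1\}$ with $t\ne m$, and $\lambda_m(I^{(k)}_t)$ takes the same value for all even $t\in\{2,\dots,n-2\}$ with $t\ne m-1$.
   Context: $\pi$ is the permutation of $\{1,\dots,n\}$ with top row $1,2,\dots,n$ and bottom row $n,3,2,5,4,\dots,n-1,n-2,1$. Right Rauzy induction: step ''0'' when the rightmost domain (top) interval is longer, ''1'' when the rightmost image (bottom) interval is longer. For $a,c>0$, $\dot\gamma_{m,a}=1^{n-1-m}0^a10^2$, $\gamma_{a,c}=0\,\dot\gamma_{n-2,a}\cdots\dot\gamma_{2,a}\,1^{c(n-1)}$; its transition matrix $\Theta_{a,c}$ (old lengths $=\Theta_{a,c}\cdot$new lengths) has row $1=(1,c,\dots,c)$, row $n=(1,c+1,\dots,c+1)$, and for $1\le i\le(n-2)/2$: row $2i$ has $0$ in column 1, $2$ in columns $2i,2i+1$, $1$ in the other columns among $2,\dots,n$; row $2i+1$ has $a$ in column $2i$,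 $a+1$ in column $2i+1$, $0$ elsewhere. $\Theta_k=\Theta_{a_k,c_k}$. $T$ is an IET of $[0,1)$ with permutation $\pi$ whose right Rauzy induction path is $\gamma_{a_1,c_1}\gamma_{a_2,c_2}\cdots$; $I^{(k)}$ is the interval on which the induced map lives after the first $k$ blocks and $I^{(k)}_1,\dots,I^{(k)}_n$ its exchanged subintervals ($I^{(0)}_i$ are the initial subintervals of $T$); lengths satisfy $\ell^{(k-1)}=\Theta_k\ell^{(k)}$. For $v\ge0$, $|v|$ is the sum of entries and $\overline v=v/|v|$. $\lambda_j$ denotes the $T$-invariant Borel probability measure such that for every $k\ge0$, $(\lambda_j(I^{(k)}_i))_i$ is a positive multiple of $\lim_{m\to\infty}\overline{\Theta_{k+1}\cdots\Theta_me_j}$. *)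

From HB Require Import structures.
From mathcomp Require Import all_boot all_order all_algebra.
From mathcomp Require Import all_classical all_reals all_analysis.
Set Implicit Arguments. Unset Strict Implicit. Unset Printing Implicit Defensive.
Import Order.TTheory GRing.Theory Num.Theory.
Import numFieldNormedType.Exports.
Local Open Scope classical_set_scope.
Local Open Scope ring_scope.

Definition toprow (n : nat) : seq nat := iota 1 n.
(* bottom row n,3,2,5,4,...,n-1,n-2,1 *)
Definition botrow (n : nat) : seq nat :=
  n :: flatten [seq [:: i.*2.+1; i.*2] | i <- iota 1%N (n.-2)./2] ++ [:: 1%N].

(* ---------- the induction words (false = step "0", true = step "1") ---------- *)
Definition gdot (n m a : nat) : seq bool :=
  nseq (n.-1 - m)%N true ++ nseq a false ++ [:: true; false; false].
(* \gamma_{a,c} = 0 \dot\gamma_{n-2,a} \dot\gamma_{n-4,a} ... \dot\gamma_{2,a} 1^{c(n-1)} *)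
Definition gamma (n a c : nat) : seq bool :=
  false :: flatten [seq gdot n (n - i.*2)%N a | i <- iota 1%N (n.-2)./2]
        ++ nseq (c * n.-1)%N true.

(* c_1 given, c_{k+1} = p^2 c_k, a_k = p c_k  (k >= 1) *)
Definition cseq (p c1 k : nat) : nat := iter k.-1 (fun c => p ^ 2 * c)%N c1.
Definition aseq (p c1 k : nat) : nat := (p * cseq p c1 k)%N.

Definition pathk (n p c1 k : nat) : seq bool :=
  flatten [seq gamma n (aseq p c1 j) (cseq p c1 j) | j <- iota 1%N k].

(* a state: (top row of labels, bottom row of labels, lengths of the labels) *)
Definition rstate (R : realType) := (seq nat * seq nat * (nat -> R))%type.

Definition droplast (s : seq nat) : seq nat := take (size s).-1 s.
Definition insert_after (x y : nat) (s : seq nat) : seq nat :=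
  take (index x s).+1 s ++ y :: drop (index x s).+1 s.

(* one right Rauzy step, required to be of type t; None if the actual type
   differs from t (or the two rightmost intervals have equal length). *)
Definition rstep (R : realType) (t : bool) (s : rstate R) : option (rstate R) :=
  let: (tp, bt, l) := s in
  let al := last 0%N tp in
  let be := last 0%N bt in
  if ~~ t then
    (* step "0": rightmost top interval (label al) is longer *)
    if l be < l al then
      Some (tp, insert_after al be (droplast bt),
            fun i => if i == al then l al - l be else l i)
    else None
  else
    (* step "1": rightmost bottom interval (label be) is longer *)
    if l al < l be then
      Some (insert_after be al (droplast tp), bt,
            fun i => if i == be then l be - l al else l i)
    else None.

Fixpoint rrun (R : realType) (w : seq bool) (s : rstate R) : option (rstate R) :=
  match w with
  | [::] => Some s
  | t :: w' => match rstep t s with Some s' => rrun w' s' | None => None end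
  end.

Definition rauzy_after (R : realType) (n p c1 : nat) (l0 : nat -> R) (k : nat)
  : option (rstate R) :=
  rrun (pathk n p c1 k) (toprow n, botrow n, l0).

Definition start (R : realType) (row : seq nat) (l : nat -> R) (i : nat) : R :=
  \sum_(j <- take (index i row) row) l j.

Definition Ik (R : realType) (n p c1 : nat) (l0 : nat -> R) (k i : nat) : set R :=
  match rauzy_after n p c1 l0 k with
  | Some (tp, _, l) => [set x : R | start tp l i <= x /\ x < start tp l i + l i]
  | None => set0
  end.

(* the IET T on [0,1) with permutation pi and lengths l0 (identity off [0,1)) *)
Definition iet (R : realType) (n : nat) (l0 : nat -> R) (x : R) : R :=
  if (0 <= x) && (x < 1) then
    x + \sum_(i <- iota 1 n)
          (if (start (toprow n) l0 i <= x) && (x < start (toprow n) l0 i + l0 i)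
           then start (botrow n) l0 i - start (toprow n) l0 i else 0)
  else x.

(* entry (i,j), 1-based *)
Definition Theta_entry (n a c i j : nat) : nat :=
  if i == 1%N then (if j == 1%N then 1%N else c)
  else if i == n then (if j == 1%N then 1%N else c.+1)
  else if ~~ odd i then
    (if j == 1%N then 0%N else if (j == i) || (j == i.+1) then 2%N else 1%N)
  else (if j == i.-1 then a else if j == i then a.+1 else 0%N).

Definition Theta (R : realType) (n a c : nat) : 'M[R]_n :=
  \matrix_(i < n, j < n) (Theta_entry n a c i.+1 j.+1)%:R.
Arguments Theta : clear implicits.

Definition Thetak (R : realType) (n p c1 k : nat) : 'M[R]_n :=
  Theta R n (aseq p c1 k) (cseq p c1 k).
Arguments Thetak : clear implicits.

Fixpoint prodTheta (R : realType) (n p c1 k d : nat) : 'M[R]_n :=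
  match d with
  | 0 => 1%:M
  | d'.+1 => prodTheta R n p c1 k d' *m Thetak R n p c1 (k + d'.+1)
  end.
Arguments prodTheta : clear implicits.

(* \overline{Theta_{k+1}...Theta_{k+d} e_j}, coordinate i (j = j0+1, i = i0+1) *)
Definition normcol (R : realType) (n p c1 k : nat) (j0 : 'I_n) (d : nat) (i : 'I_n) : R :=
  prodTheta R n p c1 k d i j0 / \sum_(i' < n) prodTheta R n p c1 k d i' j0.
Arguments normcol : clear implicits.

(* mu is lambda_j (j = j0 + 1): a T-invariant Borel probability measure
   (concentrated on [0,1)) such that for every k the vector
   (mu(I^{(k)}_i))_i is a positive multiple of lim_m \overline{Theta_{k+1}...Theta_m e_j} *)
Definition is_lambda (R : realType) (n p c1 : nat) (l0 : nat -> R)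
    (j0 : 'I_n) (mu : probability R R) : Prop :=
  mu [set x : R | 0 <= x /\ x < 1] = 1%E /\
  (forall A : set R, measurable A -> mu (iet n l0 @^-1` A) = mu A) /\
  (forall k : nat, exists L : 'I_n -> R, exists cst : R,
      0 < cst /\
      (forall i : 'I_n, (fun d : nat => normcol R n p c1 k j0 d i) @ \oo --> (L i : R)) /\
      (forall i : 'I_n, mu (Ik n p c1 l0 k i.+1) = (cst * L i)%:E)).
Arguments is_lambda {R} n p c1 l0 j0 mu.

From HB Require Import structures.
From mathcomp Require Import all_boot all_order all_algebra.
From mathcomp Require Import all_classical all_reals all_analysis.
From mathcomp Require Import zify.
Import Order.TTheory GRing.Theory Num.Theory.
Import numFieldNormedType.Exports.
Local Open Scope classical_set_scope.
Local Open Scope ring_scope.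

(* Call a label function balanced for an odd label m if it is constant on
   the odd labels 3..n-1 other than m and on the even labels 2..n-2 other
   than m-1.  Every Theta_{a,c} preserves balanced vectors: an odd row t
   yields a v_(t-1) + (a+1) v_t and an even row t yields
   |v| - v_1 + v_t + v_(t+1), and t-1 (resp. t+1) stays in the other class.
   As e_m is balanced, so are Theta_(k+1)...Theta_(k+d) e_m, its
   normalisation, its limit as d -> oo, and therefore the vector
   (lambda_m(I^(k)_t))_t, a positive multiple of that limit; m = 1 gives
   parts (1) and (2). *)

Definition odd_class (n m t : nat) := [&& odd t, (3 <= t <= n.-1)%N & t != m].
Definition even_class (n m t : nat) := [&& ~~ odd t, (2 <= t <= n - 2)%N & t != m.-1].

Definition balanced {T : Type} (n m : nat) (f : nat -> T) :=
  (forall t t', odd_class n m t -> odd_class n m t' -> f t = f t') /\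
  (forall t t', even_class n m t -> even_class n m t' -> f t = f t').

Lemma balanced_map {T U : Type} (h : T -> U) {n m} {f : nat -> T} {g : nat -> U} :
  balanced n m f ->
  (forall t, odd_class n m t || even_class n m t -> g t = h (f t)) ->
  balanced n m g.
Proof.
move=> [Hodd Heven] egf; split=> t t' ht ht'.
- by rewrite !egf ?ht ?ht' // (Hodd t t').
- by rewrite !egf ?ht ?ht' ?orbT // (Heven t t').
Qed.

Lemma balanced_lim {T : ptopologicalType} {n m} (f : nat -> nat -> T) {g : nat -> T} :
  hausdorff_space T -> (forall d, balanced n m (f d)) ->
  (forall t, f ^~ t @ \oo --> g t) -> balanced n m g.
Proof.
move=> hT bf cvf.
have lim_eq t t' : (forall d, f d t = f d t') -> g t = g t'.
  by move=> eft; apply: (cvg_unique hT (cvf t)); rewrite (funext eft); apply: cvf.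
by split=> t t' ht ht'; apply: lim_eq => d; case: (bf d) => [Hodd Heven]; auto.
Qed.

Section ThetaAction.
Variables (R : realType) (n : nat).

Definition at_label (v : 'cV[R]_n.+1) (t : nat) : R := v (inord t.-1) 0.

Lemma Theta_entry_odd_row a c t j : odd t -> (1 < t <= n)%N ->
  Theta_entry n.+1 a c t j = if j == t.-1 then a else if j == t then a.+1 else 0%N.
Proof. by move=> ot ht; rewrite /Theta_entry ot; do 2 case: eqP => [?|_]; try lia. Qed.

Lemma Theta_entry_even_row a c t j : ~~ odd t -> (0 < t < n)%N ->
  Theta_entry n.+1 a c t j =
  if j == 1%N then 0%N else if (j == t) || (j == t.+1) then 2%N else 1%N.
Proof. by move=> et ht; rewrite /Theta_entry et; do 2 case: eqP => [?|_]; try lia. Qed.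

Lemma Theta_mulmx_odd_row a c (v : 'cV[R]_n.+1) t : odd t -> (1 < t <= n)%N ->
  at_label (Theta R n.+1 a c *m v) t = a%:R * at_label v t.-1 + a.+1%:R * at_label v t.
Proof.
move=> ot ht; rewrite /at_label mxE.
rewrite (eq_bigr (fun j => (if j == inord t.-2 then a%:R * v j 0 else 0) +
                           (if j == inord t.-1 then a.+1%:R * v j 0 else 0))).
  by rewrite big_split /= -!big_mkcond !big_pred1_eq.
case=> j hj _; rewrite !mxE inordK ?(ltn_trans _ (ltnSn n)) //; last lia.
rewrite Theta_entry_odd_row -?val_eqE /= ?inordK; try lia.
have -> : (j.+1 == t.-1.+1.-1) = (j == t.-2) by lia.
have -> : (j.+1 == t.-1.+1) = (j == t.-1) by lia.
case: eqP => [e|_]; first by rewrite ifF ?addr0 //; lia.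
by case: eqP; rewrite ?mul0r ?add0r.
Qed.

Lemma Theta_mulmx_even_row a c (v : 'cV[R]_n.+1) t : ~~ odd t -> (0 < t < n)%N ->
  at_label (Theta R n.+1 a c *m v) t =
  \sum_j v j 0 - at_label v 1 + at_label v t + at_label v t.+1.
Proof.
move=> et ht; rewrite /at_label mxE.
rewrite (eq_bigr (fun j => v j 0 - (if j == inord 0 then v j 0 else 0) +
                           (if j == inord t.-1 then v j 0 else 0) +
                           (if j == inord t then v j 0 else 0))).
  by rewrite !big_split /= sumrN -!big_mkcond !big_pred1_eq.
case=> j hj _; rewrite !mxE inordK ?(ltn_trans _ (ltnSn n)) //; last lia.
rewrite Theta_entry_even_row -?val_eqE /= ?inordK; try lia.
have -> : (j.+1 == 1) = (j == 0) by lia.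
have -> : (j.+1 == t.-1.+1) || (j.+1 == t.-1.+2) = (j == t.-1) || (j == t) by lia.
case: (j =P 0) => [e|_]; first by rewrite !ifF ?mul0r ?subrr ?addr0 //; lia.
rewrite subr0; case: (j =P t.-1) => [e|_].
  by rewrite ifF ?addr0 ?mulr2n ?mulrDl ?mul1r //; lia.
by case: (j =P t) => _; rewrite ?addr0 ?mulr2n ?mulrDl ?mul1r.
Qed.

Lemma Theta_mulmx_balanced a c m (v : 'cV[R]_n.+1) :
  balanced n.+1 m (at_label v) -> balanced n.+1 m (at_label (Theta R n.+1 a c *m v)).
Proof.
case=> Hodd Heven; split=> t t' ht ht'; move: (ht) (ht').
- rewrite /odd_class => hc hc'; rewrite !Theta_mulmx_odd_row; try lia.
  by rewrite (Heven t.-1 t'.-1) ?(Hodd t t') //; rewrite /even_class; lia.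
- rewrite /even_class => hc hc'; rewrite !Theta_mulmx_even_row; try lia.
  by rewrite (Heven t t') ?(Hodd t.+1 t'.+1) //; rewrite /odd_class; lia.
Qed.

Lemma prodTheta_mulmx_balanced p c1 k d m (v : 'cV[R]_n.+1) :
  balanced n.+1 m (at_label v) ->
  balanced n.+1 m (at_label (prodTheta R n.+1 p c1 k d *m v)).
Proof.
elim: d v => [|d IHd] v bv /=; first by rewrite mul1mx.
by rewrite -mulmxA; apply/IHd/Theta_mulmx_balanced.
Qed.

Lemma delta_mx_balanced (j0 : 'I_n.+1) :
  ~~ odd j0 -> balanced n.+1 j0.+1 (at_label (delta_mx j0 0)).
Proof.
move=> ej; apply: (balanced_map id (f := fun=> 0)) => [// | t ht].
rewrite /at_label mxE eqxx andbT -val_eqE /= inordK.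
  by move: ht; rewrite /odd_class /even_class => ht; rewrite (_ : _ == _ = false) //; lia.
by move: ht; rewrite /odd_class /even_class; lia.
Qed.

Lemma normcol_balanced p c1 k (j0 : 'I_n.+1) d : ~~ odd j0 ->
  balanced n.+1 j0.+1 (fun t => normcol R n.+1 p c1 k j0 d (inord t.-1)).
Proof.
move=> /delta_mx_balanced /(prodTheta_mulmx_balanced p c1 k d).
move/(balanced_map (fun x => x / \sum_i prodTheta R n.+1 p c1 k d i j0)); apply=> t _.
by rewrite /normcol /at_label -colE mxE.
Qed.

Lemma is_lambda_balanced p c1 (l0 : nat -> R) (j0 : 'I_n.+1) (mu : probability R R) k :
  ~~ odd j0 -> is_lambda n.+1 p c1 l0 j0 mu ->
  balanced n.+1 j0.+1 (fun t => mu (Ik n.+1 p c1 l0 k t)).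
Proof.
move=> ej [_ [_ /(_ k) [L [cst [_ [cvL muL]]]]]].
have bL : balanced n.+1 j0.+1 (fun t => L (inord t.-1)).
  apply: (balanced_lim (fun d t => normcol R n.+1 p c1 k j0 d (inord t.-1)) (@Rhausdorff R)).
    by move=> d; apply: normcol_balanced.
  by move=> t; apply: cvL.
apply: (balanced_map (fun x => (cst * x)%:E) bL) => t ht.
by rewrite -muL inordK ?prednK //; move: ht; rewrite /odd_class /even_class; lia.
Qed.

End ThetaAction.

Arguments is_lambda_balanced {R n p c1 l0 j0 mu} k.

Theorem mainTheorem7 (R : realType) (n p c1 : nat) (l0 : nat -> R) :
  (4 <= n)%N -> ~~ odd n -> (n.+1 <= p)%N -> (0 < c1)%N ->
  (forall i : nat, (1 <= i <= n)%N -> 0 < l0 i) ->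
  \sum_(i <- iota 1 n) l0 i = 1 ->
  (forall k : nat, rauzy_after n p c1 l0 k <> None) ->
  (forall (j0 : 'I_n) (mu : probability R R), val j0 = 0%N ->
     is_lambda n p c1 l0 j0 mu ->
     forall k : nat,
       (forall t t' : nat, odd t -> odd t' -> (3 <= t <= n.-1)%N -> (3 <= t' <= n.-1)%N ->
          mu (Ik n p c1 l0 k t) = mu (Ik n p c1 l0 k t')) /\
       (forall t t' : nat, ~~ odd t -> ~~ odd t' -> (2 <= t <= n - 2)%N -> (2 <= t' <= n - 2)%N ->
          mu (Ik n p c1 l0 k t) = mu (Ik n p c1 l0 k t'))) /\
  (forall (j0 : 'I_n) (mu : probability R R),
     let m := (val j0).+1 in
     odd m -> (3 <= m <= n.-1)%N ->
     is_lambda n p c1 l0 j0 mu ->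
     forall k : nat,
       (forall t t' : nat, odd t -> odd t' -> (3 <= t <= n.-1)%N -> (3 <= t' <= n.-1)%N ->
          t <> m -> t' <> m ->
          mu (Ik n p c1 l0 k t) = mu (Ik n p c1 l0 k t')) /\
       (forall t t' : nat, ~~ odd t -> ~~ odd t' -> (2 <= t <= n - 2)%N -> (2 <= t' <= n - 2)%N ->
          t <> m.-1 -> t' <> m.-1 ->
          mu (Ik n p c1 l0 k t) = mu (Ik n p c1 l0 k t'))).
Proof.
case: n => [//|n] _ _ _ _ _ _ _; split.
- move=> j0 mu j00 hl k; have ej : ~~ odd j0 by rewrite j00.
  have [Hodd Heven] := is_lambda_balanced k ej hl.
  by split=> t t' *; [apply: Hodd | apply: Heven]; rewrite /odd_class /even_class j00; lia.
- move=> j0 mu /= om hm hl k.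
  have [Hodd Heven] := is_lambda_balanced k om hl.
  by split=> t t' *; [apply: Hodd | apply: Heven]; rewrite /odd_class /even_class; lia.
Qed.
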